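(* Let $\Gamma$ be a locally finite connected hyperbolic graph with base vertex $x_0$, and let $G$ be a group acting properly and cocompactly by isometries on $\Gamma$. Then the atoms in $\mathcal{A}(\Gamma)$ fall into only finitely many types; that is, there is a finite set of atoms such that every atom of $\mathcal{A}(\Gamma)$ has the same type as one of them.
   Context: $\Gamma$ is identified with its vertex set with path metric $d$; $d_x(y)=d(x,y)$. Proper means finite vertex stabilizers, and cocompact means finitely many vertex orbits. Write $B_n=\{x:d(x_0,x)\le n\}$. For finite $B$, the atom of $x$ is $\{y:d_y-d_x\text{ is constant on }B\}$. $\mathcal{A}_n(\Gamma)$ is the set of infinite atoms for $B=B_n$. The tree of atoms $\mathcal{A}(\Gamma)$ is the disjoint union over $n\ge0$ of the $\mathcal{A}_n(\Gamma)$, where $A\in\mathcal{A}_{n+1}(\Gamma)$ is a child of $A'\in\mathcal{A}_n(\Gamma)$ iff $A\subseteq A'$. An element $g\in G$ induces a morphism from $A\in\mathcal{A}_m(\Gamma)$ to $A'\in\mathcal{A}_n(\Gamma)$ if three conditions hold: (i) $gA=A'$; (ii) $g(A\cap B_{m+k})=A'\cap B_{n+k}$ for all $k\ge0$; (iii) for each $k>0$ and each $A_1\in\mathcal{A}_{m+k}(\Gamma)$ with $A_1\subseteq A$, there is $A_2\in\mathcal{A}_{n+k}(\Gamma)$ with $A_2\subseteq A'$ and $gA_1=A_2$. Two atoms $A,A'$ have the same type if some $g\in G$ induces a morphism from $A$ to $A'$. *)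

From Stdlib Require Import ZArith List Classical ClassicalEpsilon.
Import ListNotations.
Open Scope Z_scope.

Section Graphs.
Variable V : Type.
Variable adj : V -> V -> Prop.

Inductive walk : V -> V -> nat -> Prop :=
| walk_nil : forall x, walk x x 0
| walk_cons : forall x y z n, adj x y -> walk y z n -> walk x z (S n).

Definition connected : Prop := forall x y, exists n, walk x y n.

Definition locally_finite : Prop :=
  forall x, exists l : list V, forall y, adj x y -> In y l.

Definition simple_graph : Prop :=
  (forall x y, adj x y -> adj y x) /\ (forall x, ~ adj x x).

(* path metric: the least length of a walk (meaningful for connected graphs) *)
Definition dist (x y : V) : nat :=
  epsilon (inhabits 0%nat) (fun n => walk x y n /\ forall m, walk x y m -> (n <= m)%nat).

Definition d (x y : V) : Z := Z.of_nat (dist x y).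

(* Gromov hyperbolicity (four-point condition with doubled Gromov products):
   (x|y)_w >= min((x|z)_w, (y|z)_w) - delta *)
Definition gromov2 (w x y : V) : Z := d x w + d y w - d x y.
Definition hyperbolic : Prop :=
  exists delta : Z, forall w x y z,
    gromov2 w x y >= Z.min (gromov2 w x z) (gromov2 w y z) - 2 * delta.

Definition finite_set (P : V -> Prop) : Prop :=
  exists l : list V, forall y, P y -> In y l.

Definition ball (x0 : V) (n : nat) (y : V) : Prop := (dist x0 y <= n)%nat.

Definition atom (x0 : V) (n : nat) (x : V) (y : V) : Prop :=
  exists c : Z, forall b, ball x0 n b -> d y b - d x b = c.

Definition set_eq (P Q : V -> Prop) : Prop := forall y, P y <-> Q y.
Definition subset (P Q : V -> Prop) : Prop := forall y, P y -> Q y.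

Definition in_An (x0 : V) (n : nat) (A : V -> Prop) : Prop :=
  (exists x, set_eq A (atom x0 n x)) /\ ~ finite_set A.

Variable G : Type.
Variable act : G -> V -> V.

Definition image (g : G) (P : V -> Prop) (y : V) : Prop :=
  exists z, P z /\ act g z = y.

Definition induces_morphism (x0 : V) (g : G) (m : nat) (A : V -> Prop)
    (n : nat) (A' : V -> Prop) : Prop :=
  set_eq (image g A) A' /\
  (forall k : nat,
     set_eq (image g (fun y => A y /\ ball x0 (m + k) y))
            (fun y => A' y /\ ball x0 (n + k) y)) /\
  (forall k : nat, (0 < k)%nat -> forall A1, in_An x0 (m + k) A1 -> subset A1 A ->
     exists A2, in_An x0 (n + k) A2 /\ subset A2 A' /\ set_eq (image g A1) A2).

Definition same_type (x0 : V) (m : nat) (A : V -> Prop) (n : nat) (A' : V -> Prop) : Prop :=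
  exists g : G, induces_morphism x0 g m A n A'.

End Graphs.

Section Groups.
Variables (V G : Type) (mul : G -> G -> G) (one : G) (inv : G -> G) (act : G -> V -> V).

Definition is_group : Prop :=
  (forall a b c, mul a (mul b c) = mul (mul a b) c) /\
  (forall a, mul one a = a) /\ (forall a, mul a one = a) /\
  (forall a, mul (inv a) a = one) /\ (forall a, mul a (inv a) = one).

Definition is_action : Prop :=
  (forall x, act one x = x) /\ (forall g h x, act (mul g h) x = act g (act h x)).

Definition acts_by_isometries (adj : V -> V -> Prop) : Prop :=
  forall g x y, d V adj (act g x) (act g y) = d V adj x y.

Definition proper_action : Prop :=
  forall x, exists l : list G, forall g, act g x = x -> In g l.

Definition cocompact_action : Prop :=
  exists l : list V, forall v, exists u g, In u l /\ act g u = v.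

End Groups.

(* An infinite atom A of level n lies in the cone below a point p at depth n, namely a point
   on a geodesic from an element x of A to x0. By the four-point condition (constant K), a
   geodesic from the cone to a point of B_n reaches depth n within 4K+2 of p, and a geodesic
   from the cone to a point b whose geodesics to x0 avoid the (5K+2)-ball around p dips to
   depth <= n. Hence A and its subdivision into atoms of deeper levels are determined by the
   depth function and the function d_x - d_x(p) on the (7K+3)-ball around p. Moving p by the
   group to one of finitely many orbit representatives, local finiteness leaves finitely many
   possible such data, and two atoms with equal data are related by a group element inducing
   a morphism. Atoms of level below 7K+3 are determined by the distances from x to a fixed
   finite ball around x0. *)
From Pilot Require Import Defs.
From Stdlib Require Import ZArith List Lia Classical ClassicalEpsilon Wf_nat.
Import ListNotations.

Lemma ex_minimal_nat (P : nat -> Prop) :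
  (exists n, P n) -> exists n, P n /\ forall m, P m -> (n <= m)%nat.
Proof.
  intros HP.
  destruct (dec_inh_nat_subset_has_unique_least_element P (fun n => classic (P n)) HP)
    as [n [Hn _]].
  now exists n.
Qed.

Lemma discrete_ivt (h : nat -> Z) (c : Z) (m : nat) :
  (forall i, (i < m)%nat -> Z.abs (h (S i) - h i) <= 1)%Z ->
  (h 0%nat >= c)%Z -> (h m <= c)%Z ->
  exists j, (j <= m)%nat /\ h j = c.
Proof.
  induction m as [|m IH]; intros Hstep H0 Hm.
  - exists 0%nat; split; lia.
  - destruct (Z_le_gt_dec (h m) c) as [Hle|Hgt].
    + destruct IH as [j [Hj Hj']]; auto. exists j; split; auto.
    + exists (S m); split; auto. specialize (Hstep m (Nat.lt_succ_diag_r m)). lia.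
Qed.

Lemma finite_classes (X Key : Type) (P : X -> Prop) (E : X -> X -> Prop)
    (key_of : X -> Key -> Prop) (keys : list Key) :
  (forall a, P a -> exists k, In k keys /\ key_of a k) ->
  (forall a b k, P a -> P b -> key_of a k -> key_of b k -> E a b) ->
  exists reps : list X, (forall r, In r reps -> P r) /\
    forall a, P a -> exists r, In r reps /\ E a r.
Proof.
  intros Hkeys HE.
  enough (gen : forall l, exists reps : list X, (forall r, In r reps -> P r) /\
     forall a, P a -> (exists k, In k l /\ key_of a k) -> exists r, In r reps /\ E a r).
  { destruct (gen keys) as [reps [R1 R2]]. exists reps. split; auto. }
  induction l as [|k l [reps [R1 R2]]].
  - exists []. split; [intros r []|]. intros a _ [k [[] _]].
  - destruct (classic (exists a, P a /\ key_of a k)) as [[a0 [Pa0 Ka0]]|Hno].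
    + exists (a0 :: reps). split.
      * intros r [<-|Hr]; auto.
      * intros a Pa [k' [[<-|Hk'] Hka]].
        -- exists a0. split; [left; auto | eapply HE; eauto].
        -- destruct (R2 a Pa (ex_intro _ k' (conj Hk' Hka))) as [r [Hr Er]].
           exists r; split; [right|]; auto.
    + exists reps. split; auto.
      intros a Pa [k' [[<-|Hk'] Hka]]; [exfalso; eauto | eauto].
Qed.

Fixpoint lists_over (len : nat) (vals : list Z) : list (list Z) :=
  match len with
  | O => [[]]
  | S m => flat_map (fun v => map (cons v) (lists_over m vals)) vals
  end.

Lemma lists_over_complete vals l : (forall z, In z l -> In z vals) ->
  In l (lists_over (length l) vals).
Proof.
  induction l as [|a l IH]; intros H; simpl; auto.
  apply in_flat_map. exists a. split; [apply H; left; auto|].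
  apply in_map, IH. intros z Hz; apply H; right; auto.
Qed.

Definition zrange (R : Z) : list Z :=
  map (fun i => Z.of_nat i - R)%Z (seq 0 (Z.to_nat (2 * R + 1))).

Lemma zrange_complete R z : (- R <= z <= R)%Z -> In z (zrange R).
Proof.
  intros Hz. apply in_map_iff. exists (Z.to_nat (z + R)). split; [lia|].
  apply in_seq. lia.
Qed.

Definition clamp (R z : Z) : Z := Z.max (- R) (Z.min R z).

Definition clamped_profile {A : Type} (R : Z) (f : A -> Z) (l : list A) : list Z :=
  map (fun v => clamp R (f v)) l.

Lemma clamped_profile_in {A : Type} R (f : A -> Z) l : (0 <= R)%Z ->
  In (clamped_profile R f l) (lists_over (length l) (zrange R)).
Proof.
  intros HR. rewrite <- (length_map (fun v => clamp R (f v))).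
  apply lists_over_complete. intros z Hz. apply in_map_iff in Hz as [v [<- _]].
  apply zrange_complete. unfold clamp. lia.
Qed.

Lemma clamped_profile_eq {A : Type} R (f f' : A -> Z) l v :
  clamped_profile R f l = clamped_profile R f' l -> In v l ->
  (- R <= f v <= R)%Z -> (- R <= f' v <= R)%Z -> f v = f' v.
Proof.
  intros E Hv Hf Hf'. pose proof (ext_in_map E v Hv) as Ev. unfold clamp in Ev. lia.
Qed.

Section HyperbolicGraph.
Variable V : Type.
Variable adj : V -> V -> Prop.
Hypothesis adj_sym : forall x y, adj x y -> adj y x.
Hypothesis Hconn : connected V adj.

Local Notation walk := (walk V adj).
Local Notation dist := (dist V adj).
Local Notation D := (d V adj).

Lemma walk_app x y a : walk x y a -> forall z b, walk y z b -> walk x z (a + b).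
Proof. induction 1; intros; simpl; auto. econstructor; eauto. Qed.

Lemma walk_snoc x y n : walk x y n -> forall z, adj y z -> walk x z (S n).
Proof.
  intros H z Hz. replace (S n) with (n + 1)%nat by lia.
  eapply walk_app; eauto. econstructor; eauto. constructor.
Qed.

Lemma walk_rev x y n : walk x y n -> walk y x n.
Proof. induction 1. constructor. eapply walk_snoc; eauto. Qed.

Lemma walk_path x y n : walk x y n -> exists gam : nat -> V,
  gam 0%nat = x /\ gam n = y /\ forall i, (i < n)%nat -> adj (gam i) (gam (S i)).
Proof.
  induction 1 as [x|x y z n Hxy _ [gam [G0 [Gn Gs]]]].
  - exists (fun _ => x). repeat split; auto. intros; lia.
  - exists (fun i => match i with 0%nat => x | S j => gam j end).
    repeat split; auto. intros [|i] Hi; simpl; [subst; auto | apply Gs; lia].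
Qed.

Lemma dist_spec x y : walk x y (dist x y) /\ forall m, walk x y m -> (dist x y <= m)%nat.
Proof. unfold Defs.dist. apply epsilon_spec, ex_minimal_nat, Hconn. Qed.

Lemma dist_walk x y : walk x y (dist x y).
Proof. apply dist_spec. Qed.

Lemma dist_le_walk x y m : walk x y m -> (dist x y <= m)%nat.
Proof. apply dist_spec. Qed.

Lemma dist_eq0 x y : dist x y = 0%nat -> x = y.
Proof. intros H. pose proof (dist_walk x y) as W. rewrite H in W. now inversion W. Qed.

Lemma dist_eq1_adj x y : dist x y = 1%nat -> adj x y.
Proof.
  intros H. pose proof (dist_walk x y) as W. rewrite H in W.
  inversion W as [|? ? ? ? Hxy W']; subst. now inversion W'; subst.
Qed.

Open Scope Z_scope.

Lemma d_eq1_adj x y : D x y = 1 -> adj x y.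
Proof. unfold d. intros. apply dist_eq1_adj. lia. Qed.

Lemma d_ge0 x y : 0 <= D x y.
Proof. unfold d. lia. Qed.

Lemma d_sym x y : D x y = D y x.
Proof.
  unfold d. f_equal.
  apply Nat.le_antisymm; apply dist_le_walk, walk_rev, dist_walk.
Qed.

Lemma d_refl x : D x x = 0.
Proof. unfold d. pose proof (dist_le_walk x x 0 (walk_nil _ _ x)). lia. Qed.

Lemma d_triangle x y z : D x z <= D x y + D y z.
Proof.
  unfold d. enough (dist x z <= dist x y + dist y z)%nat by lia.
  apply dist_le_walk. eapply walk_app; apply dist_walk.
Qed.

Lemma d_eq0 x y : D x y = 0 -> x = y.
Proof. unfold d. intros. apply dist_eq0. lia. Qed.

Lemma d_adj x y : adj x y -> D x y <= 1.
Proof.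
  unfold d. intros H.
  enough (dist x y <= 1)%nat by lia.
  apply dist_le_walk. econstructor; eauto. constructor.
Qed.

Lemma geodesic_exists x y : exists gam : nat -> V,
  gam 0%nat = x /\ gam (dist x y) = y /\
  (forall i, (i < dist x y)%nat -> D (gam i) (gam (S i)) <= 1) /\
  (forall i, (i <= dist x y)%nat ->
     D x (gam i) = Z.of_nat i /\ D (gam i) y = Z.of_nat (dist x y) - Z.of_nat i).
Proof.
  destruct (walk_path _ _ _ (dist_walk x y)) as [gam [G0 [GL Gs]]].
  set (n := dist x y) in *.
  assert (Dxy : D x y = Z.of_nat n) by reflexivity.
  assert (from_x : forall i, (i <= n)%nat -> D x (gam i) <= Z.of_nat i).
  { induction i; intros Hi.
    - rewrite G0, d_refl; lia.
    - pose proof (d_triangle x (gam i) (gam (S i))).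
      pose proof (d_adj _ _ (Gs i ltac:(lia))). specialize (IHi ltac:(lia)). lia. }
  assert (to_y : forall j, (j <= n)%nat -> D (gam (n - j)%nat) y <= Z.of_nat j).
  { induction j; intros Hj.
    - rewrite Nat.sub_0_r, GL, d_refl; lia.
    - assert (E : (n - j = S (n - S j))%nat) by lia.
      pose proof (d_triangle (gam (n - S j)%nat) (gam (n - j)%nat) y).
      pose proof (d_adj _ _ (Gs (n - S j)%nat ltac:(lia))). rewrite <- E in *.
      specialize (IHj ltac:(lia)). lia. }
  exists gam. split; [exact G0|split; [exact GL|split]].
  - intros i Hi. apply d_adj, Gs; auto.
  - intros i Hi. pose proof (from_x i Hi). pose proof (to_y (n - i)%nat ltac:(lia)).
    replace (n - (n - i))%nat with i in * by lia.
    pose proof (d_triangle x (gam i) y). lia.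
Qed.

Lemma point_between x y (i : Z) : 0 <= i <= D x y ->
  exists w, D x w = i /\ D w y = D x y - i.
Proof.
  intros Hi. destruct (geodesic_exists x y) as [gam [_ [_ [_ Gd]]]].
  destruct (Gd (Z.to_nat i) ltac:(unfold d in Hi; lia)) as [E1 E2].
  exists (gam (Z.to_nat i)). unfold d at 3. lia.
Qed.

Ltac dsym a b := pose proof (d_sym a b).
Ltac dtri a b c := pose proof (d_triangle a b c).
Ltac dge0 a b := pose proof (d_ge0 a b).
Ltac drefl a := pose proof (d_refl a).

Variable x0 : V.
Variable K : Z.
Hypothesis K_ge0 : 0 <= K.

Local Notation gp w a b := (D a w + D b w - D a b).

Hypothesis four_point : forall w a b c, gp w a b >= gp w a c - K \/ gp w a b >= gp w b c - K.

Lemma same_depth_close s t a al be : D s x0 = D t x0 ->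
  gp s a x0 <= al -> gp t a x0 <= be -> D s t <= al + be + K.
Proof.
  intros H1 H2 H3. destruct (four_point s a x0 t) as [F|F];
  dsym a s; dsym x0 s; dsym t s; dsym a t; dsym x0 t; dtri a t x0; dtri a s x0; dtri a s t; lia.
Qed.

Lemma apex_near_geodesic p z a n e : D p x0 = n -> D z x0 = D z p + n ->
  gp a z x0 <= e -> D a x0 >= n -> gp p a x0 <= e + K.
Proof.
  intros H1 H2 H3 H4. destruct (four_point p z x0 a) as [F|F];
  dsym z p; dsym x0 p; dsym a p; dsym z a; dsym x0 a; dtri z a x0; lia.
Qed.

Lemma geodesic_center z b (gam : nat -> V) (L : nat) :
  gam 0%nat = z -> gam L = b -> D z b = Z.of_nat L ->
  (forall i, (i < L)%nat -> D (gam i) (gam (S i)) <= 1) ->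
  (forall i, (i <= L)%nat -> D z (gam i) = Z.of_nat i /\ D (gam i) b = Z.of_nat L - Z.of_nat i) ->
  exists m, (m <= L)%nat /\ gp (gam m) z x0 <= K + 2 /\ gp (gam m) b x0 <= K /\
    forall j, (j <= m)%nat -> gp (gam j) z x0 <= gp (gam m) z x0.
Proof.
  intros G0 GL DL Gs Gd.
  assert (mono : forall j k, (j + k <= L)%nat ->
     gp (gam j) z x0 <= gp (gam (j + k)%nat) z x0).
  { intros j k; induction k; intros Hk.
    - rewrite Nat.add_0_r; lia.
    - specialize (IHk ltac:(lia)). replace (j + S k)%nat with (S (j + k)) by lia.
      pose proof (Gs (j + k)%nat ltac:(lia)). destruct (Gd (j + k)%nat ltac:(lia)).
      destruct (Gd (S (j + k))%nat ltac:(lia)).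
      dtri (gam (j + k)%nat) (gam (S (j + k))) x0.
      dsym x0 (gam (j + k)%nat). dsym x0 (gam (S (j + k))). lia. }
  destruct (ex_minimal_nat (fun m => (m <= L)%nat /\ gp (gam m) b x0 <= K))
    as [m [[Hm1 Hm2] Hmin]].
  { exists L. split; auto. rewrite GL. drefl b. dsym b x0. lia. }
  exists m. split; auto. split; [|split; auto].
  - destruct m as [|m'].
    + rewrite G0. drefl z. dsym z x0. lia.
    + assert (Hn : ~ gp (gam m') b x0 <= K).
      { intro Hc. assert (Hle : (m' <= L)%nat) by lia. specialize (Hmin m' (conj Hle Hc)). lia. }
      destruct (Gd m' ltac:(lia)). destruct (Gd (S m') ltac:(lia)). pose proof (Gs m' ltac:(lia)).
      dtri (gam m') (gam (S m')) x0. dsym x0 (gam (S m')). dsym b (gam (S m')).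
      destruct (four_point (gam m') z b x0) as [F|F];
      dsym z (gam m'); dsym b (gam m'); dsym x0 (gam m'); dsym z x0; dsym b x0; lia.
  - intros j Hj. replace m with (j + (m - j))%nat by lia. apply mono. lia.
Qed.

Lemma depth_step u v : D u v <= 1 -> Z.abs (D v x0 - D u x0) <= 1.
Proof. intros H. dtri v u x0. dtri u v x0. dsym u v. lia. Qed.

Lemma cone_geodesic_exit p z b n : D p x0 = n -> D z x0 = D z p + n -> D b x0 <= n ->
  exists w, D w x0 <= n /\ D w p <= 4 * K + 2 /\ D z b = D z w + D w b.
Proof.
  intros Hp Hz Hb.
  destruct (geodesic_exists z b) as [gam [G0 [GL [Gs Gd]]]].
  set (L := Defs.dist V adj z b) in *.
  assert (DL : D z b = Z.of_nat L) by reflexivity.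
  destruct (geodesic_center z b gam L G0 GL DL Gs Gd) as [m [Hm [Hf [Hg Hmono]]]].
  destruct (Z_le_gt_dec n (D (gam m) x0)) as [Hr|Hr].
  - pose proof (apex_near_geodesic p z (gam m) n (K + 2) Hp Hz Hf ltac:(lia)).
    exists b. drefl b. split; auto. split; [|lia].
    dtri b (gam m) p. dsym b (gam m). dsym p (gam m). dsym x0 p. dsym x0 (gam m). lia.
  - destruct (discrete_ivt (fun i => D (gam i) x0) n m) as [j [Hj Hj']].
    + intros i Hi. apply depth_step, Gs. lia.
    + simpl. rewrite G0. dge0 z p. lia.
    + simpl. lia.
    + simpl in Hj'. exists (gam j). split; [lia|split].
      * pose proof (Hmono j Hj).
        pose proof (same_depth_close (gam j) p z (K + 2) 0 ltac:(lia) ltac:(lia)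
                      ltac:(dsym x0 p; lia)). lia.
      * destruct (Gd j ltac:(lia)). lia.
Qed.

Definition passes_near (p b : V) : Prop :=
  exists q, D q p <= 5 * K + 2 /\ D b x0 = D b q + D q x0.

Lemma cone_geodesic_dips p z b n : D p x0 = n -> D z x0 = D z p + n ->
  ~ passes_near p b -> exists w, D w x0 <= n /\ D z b = D z w + D w b.
Proof.
  intros Hp Hz Hreg.
  destruct (geodesic_exists z b) as [gam [G0 [GL [Gs Gd]]]].
  set (L := Defs.dist V adj z b) in *.
  assert (DL : D z b = Z.of_nat L) by reflexivity.
  destruct (classic (exists i, (i <= L)%nat /\ D (gam i) x0 <= n)) as [[i [Hi Hi']]|Hno].
  { exists (gam i). split; auto. destruct (Gd i Hi). lia. }
  destruct (geodesic_center z b gam L G0 GL DL Gs Gd) as [m [Hm [Hf [Hg _]]]].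
  assert (Hr : D (gam m) x0 > n).
  { destruct (Z_le_gt_dec (D (gam m) x0) n); auto. exfalso; apply Hno; eauto. }
  assert (Hbx : D b x0 > n).
  { destruct (Z_le_gt_dec (D b x0) n); auto. exfalso; apply Hno. exists L. rewrite GL. auto. }
  dge0 p x0.
  destruct (point_between b x0 (D b x0 - n) ltac:(lia)) as [q [Q1 Q2]].
  pose proof (apex_near_geodesic p z (gam m) n (K + 2) Hp Hz Hf ltac:(lia)) as N1.
  pose proof (apex_near_geodesic q b (gam m) n K ltac:(lia) ltac:(lia)
                ltac:(dsym b (gam m); lia) ltac:(lia)) as N2.
  pose proof (same_depth_close p q (gam m) (2 * K + 2) (2 * K) ltac:(lia)
                ltac:(dsym (gam m) p; lia) ltac:(dsym (gam m) q; lia)) as N3.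
  exfalso. apply Hreg. exists q. dsym q p. split; lia.
Qed.

Lemma geodesic_point_near a b q : exists qb, D a qb + D qb b = D a b /\ D q qb <= gp q a b + K.
Proof.
  destruct (Z_le_gt_dec (D a q) (D a b)) as [H|H].
  - dge0 a q. destruct (point_between a b (D a q) ltac:(lia)) as [w [Q1 Q2]].
    exists w. split. lia.
    destruct (four_point w a b q) as [F|F];
    dsym a w; dsym b w; dsym q w; dtri a q b; dsym b q; lia.
  - exists b. drefl b. split. lia. dge0 q b. dsym b q. lia.
Qed.

Lemma shifted_distance_agrees p q b u c : D q p <= 5 * K + 2 ->
  D b x0 = D b q + D q x0 -> D q x0 >= K + 1 ->
  (forall w, D w p <= 7 * K + 3 -> D u w = D x0 w + c) -> D b u = D b x0 + c.
Proof.
  intros Hq Hbq Hqx Hloc.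
  assert (Uq : D u q = D x0 q + c) by (apply Hloc; lia).
  destruct (point_between q x0 (K + 1) ltac:(lia)) as [qt [Q1 Q2]].
  assert (Ut : D u qt = D x0 qt + c).
  { apply Hloc. dtri qt q p. dsym qt q. lia. }
  assert (Gk : gp q b u <= K).
  { destruct (four_point q b qt u) as [F|F]; dtri b qt x0; dsym qt q; dsym u q; dsym qt u;
      dsym x0 qt; dsym x0 q; dsym qt x0; dsym q x0; lia. }
  destruct (geodesic_point_near b u q) as [qb [E1 E2]].
  assert (Uqb : D u qb = D x0 qb + c).
  { apply Hloc. dtri qb q p. dsym qb q. dsym u q. dge0 b u. lia. }
  dtri b qb x0. dsym qb u. dsym x0 qb. dtri b q u. dsym q u. dsym x0 q. lia.
Qed.

Local Notation atom := (atom V adj x0).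
Local Notation ball := (ball V adj x0).

Lemma ball_d N b : ball N b <-> D x0 b <= Z.of_nat N.
Proof. unfold Defs.ball, d. lia. Qed.

Lemma atom_refl N y : atom N y y.
Proof. exists 0. intros; lia. Qed.

Lemma atom_trans N y z t : atom N y z -> atom N z t -> atom N y t.
Proof.
  intros [c Hc] [c' Hc']. exists (c + c'). intros b Hb.
  specialize (Hc b Hb). specialize (Hc' b Hb). lia.
Qed.

Lemma atom_mono N k y z : atom (N + k) y z -> atom N y z.
Proof. intros [c Hc]. exists c. intros b Hb. apply Hc. unfold Defs.ball in *. lia. Qed.

Lemma atom_in_cone n p x y : D p x0 = Z.of_nat n -> D x x0 = D x p + Z.of_nat n ->
  atom n x y -> D y x0 = D y p + Z.of_nat n.
Proof.
  intros Hp Hx [c Hc].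
  pose proof (Hc x0 ltac:(apply ball_d; drefl x0; lia)).
  pose proof (Hc p ltac:(apply ball_d; dsym x0 p; lia)). dsym x0 y. dsym x0 x. lia.
Qed.

Lemma atom_difference_far n p x y y' b : D p x0 = Z.of_nat n -> D x x0 = D x p + Z.of_nat n ->
  atom n x y -> atom n x y' -> ~ passes_near p b -> D y' b - D y b = D y' p - D y p.
Proof.
  intros Hp Hx Hy Hy' Hfar.
  destruct (cone_geodesic_dips p y b _ Hp (atom_in_cone n p x y Hp Hx Hy) Hfar) as [w [W1 W2]].
  destruct (cone_geodesic_dips p y' b _ Hp (atom_in_cone n p x y' Hp Hx Hy') Hfar)
    as [w' [W1' W2']].
  destruct Hy as [cy Hcy], Hy' as [cy' Hcy'].
  assert (in_ball : forall v, D v x0 <= Z.of_nat n -> ball n v).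
  { intros v Hv. apply ball_d. dsym x0 v. lia. }
  pose proof (Hcy w (in_ball w W1)). pose proof (Hcy' w (in_ball w W1)).
  pose proof (Hcy w' (in_ball w' W1')). pose proof (Hcy' w' (in_ball w' W1')).
  pose proof (Hcy p (in_ball p ltac:(lia))). pose proof (Hcy' p (in_ball p ltac:(lia))).
  dtri y' w b. dtri y w' b. lia.
Qed.

Variable G : Type.
Variable act : G -> V -> V.
Hypothesis act_isometry : forall g y z, D (act g y) (act g z) = D y z.

(* Near the apex [p], [g] carries the depth function and the distance profile of [x] to
   those of [x'] near [p'], up to the normalisations at the apices; [h] is its inverse. *)
Local Set Implicit Arguments.
Record cone_match (n n' : nat) (x x' p p' : V) (g h : G) : Prop := {
  cm_inv_l : forall v, act h (act g v) = v;
  cm_inv_r : forall v, act g (act h v) = v;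
  cm_apex : D p x0 = Z.of_nat n;
  cm_apex' : D p' x0 = Z.of_nat n';
  cm_deep : Z.of_nat n >= 6 * K + 3;
  cm_deep' : Z.of_nat n' >= 6 * K + 3;
  cm_cone : D x x0 = D x p + Z.of_nat n;
  cm_cone' : D x' x0 = D x' p' + Z.of_nat n';
  cm_maps_apex : act g p = p';
  cm_depth : forall w, D w p <= 7 * K + 3 ->
    D x0 (act g w) - Z.of_nat n' = D x0 w - Z.of_nat n;
  cm_profile : forall w, D w p <= 7 * K + 3 ->
    D x' (act g w) - D x' p' = D x w - D x p }.
Local Unset Implicit Arguments.

Lemma cone_match_sym {n n' x x' p p' g h} :
  cone_match n n' x x' p p' g h -> cone_match n' n x' x p' p h g.
Proof.
  intros M.
  assert (ball_back : forall w, D w p' <= 7 * K + 3 -> D (act h w) p <= 7 * K + 3).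
  { intros w Hw. rewrite <- (act_isometry g), (cm_inv_r M), (cm_maps_apex M). exact Hw. }
  split; try apply M.
  - rewrite <- (cm_maps_apex M). apply M.
  - intros w Hw. pose proof (cm_depth M _ (ball_back w Hw)). rewrite (cm_inv_r M) in *. lia.
  - intros w Hw. pose proof (cm_profile M _ (ball_back w Hw)). rewrite (cm_inv_r M) in *. lia.
Qed.

Section Transfer.
Context {n n' : nat} {x x' p p' : V} {g h : G}.
Hypothesis M : cone_match n n' x x' p p' g h.

Lemma depth_transfer b : passes_near p b ->
  D x0 (act g b) - Z.of_nat n' = D x0 b - Z.of_nat n.
Proof.
  intros [q [Hq Hbq]].
  set (u := act h x0).
  assert (Hloc : forall w, D w p <= 7 * K + 3 -> D u w = D x0 w + (Z.of_nat n' - Z.of_nat n)).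
  { intros w Hw. rewrite <- (act_isometry g). unfold u. rewrite (cm_inv_r M).
    pose proof (cm_depth M w Hw). lia. }
  assert (Hqx : D q x0 >= K + 1).
  { pose proof (cm_apex M). pose proof (cm_deep M). dtri p q x0. dsym p q. lia. }
  pose proof (shifted_distance_agrees p q b u _ Hq Hbq Hqx Hloc) as E.
  rewrite <- (act_isometry g) in E. unfold u in E. rewrite (cm_inv_r M) in E.
  dsym x0 (act g b). dsym x0 b. lia.
Qed.

Lemma atom_depth_transfer y : atom n x y ->
  D x0 (act g y) - Z.of_nat n' = D x0 y - Z.of_nat n.
Proof.
  intros Hy. apply depth_transfer. exists p. drefl p. split; [lia|].
  rewrite (cm_apex M). exact (atom_in_cone n p x y (cm_apex M) (cm_cone M) Hy).
Qed.

Lemma atom_image_in_cone y : atom n x y -> D (act g y) x0 = D (act g y) p' + Z.of_nat n'.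
Proof.
  intros Hy. pose proof (atom_depth_transfer y Hy).
  pose proof (atom_in_cone n p x y (cm_apex M) (cm_cone M) Hy).
  rewrite <- (cm_maps_apex M), act_isometry. dsym x0 (act g y). dsym x0 y. lia.
Qed.

Lemma atom_image y : atom n x y -> atom n' x' (act g y).
Proof.
  intros Hy. pose proof Hy as [cy Hcy].
  set (c' := cy + D x p - D x' p').
  assert (Hloc : forall w1, D w1 p' <= 7 * K + 3 -> D x0 w1 <= Z.of_nat n' ->
                            D (act g y) w1 = D x' w1 + c').
  { intros w1 H1 H2. set (w := act h w1).
    assert (Ew : act g w = w1) by apply (cm_inv_r M).
    assert (Dw : D w p <= 7 * K + 3).
    { rewrite <- (act_isometry g), Ew, (cm_maps_apex M); auto. }
    pose proof (cm_depth M w Dw) as Edepth. rewrite Ew in Edepth.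
    pose proof (Hcy w ltac:(apply ball_d; lia)).
    pose proof (cm_profile M w Dw) as Eprof. rewrite Ew in Eprof.
    rewrite <- Ew at 1. rewrite act_isometry. unfold c'. lia. }
  exists c'. intros b Hb0. apply ball_d in Hb0.
  assert (Hb : D b x0 <= Z.of_nat n') by (dsym b x0; lia).
  pose proof (cm_apex' M) as Hp'.
  destruct (cone_geodesic_exit p' (act g y) b _ Hp' (atom_image_in_cone y Hy) Hb)
    as [w1 [W1 [W2 W3]]].
  destruct (cone_geodesic_exit p' x' b _ Hp' (cm_cone' M) Hb) as [w2 [V1 [V2 V3]]].
  pose proof (Hloc w1 ltac:(lia) ltac:(dsym x0 w1; lia)).
  pose proof (Hloc w2 ltac:(lia) ltac:(dsym x0 w2; lia)).
  dtri (act g y) w2 b. dtri x' w1 b. lia.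
Qed.

Lemma atom_refine_image y y' k : atom n x y -> atom n x y' -> atom (n + k) y y' ->
  atom (n' + k) (act g y) (act g y').
Proof.
  intros Hy Hy' [c Hc]. exists c. intros b' Hb'. apply ball_d in Hb'.
  set (b := act h b'). assert (Eb : act g b = b') by apply (cm_inv_r M).
  rewrite <- Eb, !act_isometry.
  destruct (classic (passes_near p b)) as [Hnear|Hfar].
  - pose proof (depth_transfer b Hnear). rewrite Eb in *.
    apply Hc, ball_d. lia.
  - pose proof (cm_apex M) as Hp.
    rewrite (atom_difference_far n p x y y' b Hp (cm_cone M) Hy Hy' Hfar).
    apply Hc, ball_d. dsym x0 p. lia.
Qed.

End Transfer.

Lemma cone_match_induces_morphism n n' x x' p p' g h A A' :
  cone_match n n' x x' p p' g h ->
  set_eq V A (atom n x) -> set_eq V A' (atom n' x') ->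
  induces_morphism V adj G act x0 g n A n' A'.
Proof.
  intros M HA HA'. pose proof (cone_match_sym M) as M'.
  split; [|split].
  - intros z. split.
    + intros [y [Hy <-]]. apply HA', (atom_image M), HA, Hy.
    + intros Hz. exists (act h z). rewrite (cm_inv_r M).
      split; [apply HA, (atom_image M'), HA', Hz | reflexivity].
  - intros k z. split.
    + intros [y [[Hy Hb] <-]]. apply HA in Hy.
      split; [apply HA', (atom_image M), Hy|].
      pose proof (atom_depth_transfer M y Hy). apply ball_d in Hb. apply ball_d. lia.
    + intros [Hz Hb]. apply HA' in Hz. exists (act h z). rewrite (cm_inv_r M).
      split; [split; [apply HA, (atom_image M'), Hz|] | reflexivity].
      pose proof (atom_depth_transfer M' z Hz). apply ball_d in Hb. apply ball_d. lia.
  - intros k _ A1 [[x1 HA1] Hinf] Hsub.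
    assert (Hx1 : atom n x x1) by (apply HA, Hsub, HA1, atom_refl).
    exists (image V G act g A1). split; [split|split].
    + exists (act g x1). intros z. split.
      * intros [y [Hy <-]]. apply (atom_refine_image M); auto.
        -- apply HA, Hsub, Hy.
        -- apply HA1, Hy.
      * intros Hz. exists (act h z). rewrite (cm_inv_r M). split; [|reflexivity].
        assert (Z1 : atom n' x' (act g x1)) by apply (atom_image M), Hx1.
        assert (Z2 : atom n' x' z) by (eapply atom_trans; [exact Z1 | eapply atom_mono, Hz]).
        pose proof (atom_refine_image M' (act g x1) z k Z1 Z2 Hz) as E.
        rewrite (cm_inv_l M) in E. apply HA1, E.
    + intros [l Hl]. apply Hinf. exists (map (act h) l). intros y Hy.
      rewrite <- (cm_inv_l M y). apply in_map, Hl. now exists y.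
    + intros z [y [Hy <-]]. apply HA', (atom_image M), HA, Hsub, Hy.
    + intros z. tauto.
Qed.

Lemma induces_morphism_id (one : G) n A B : (forall v, act one v = v) -> set_eq V A B ->
  induces_morphism V adj G act x0 one n A n B.
Proof.
  intros Hone HAB. split; [|split].
  - intros z. split.
    + intros [y [Hy <-]]. rewrite Hone. apply HAB, Hy.
    + intros Hz. exists z. rewrite Hone. split; [apply HAB, Hz | reflexivity].
  - intros k z. split.
    + intros [y [[Hy Hb] <-]]. rewrite Hone. split; [apply HAB, Hy | exact Hb].
    + intros [Hz Hb]. exists z. rewrite Hone.
      split; [split; [apply HAB, Hz | exact Hb] | reflexivity].
  - intros k _ A1 HA1 Hsub. exists A1. split; [exact HA1|split].
    + intros y Hy. apply HAB, Hsub, Hy.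
    + intros z. split; [intros [y [Hy <-]] | intros Hz; exists z]; rewrite Hone; auto.
Qed.

Hypothesis Hlf : locally_finite V adj.

Lemma neighbours_finite (l : list V) : exists l', forall y z, In y l -> adj y z -> In z l'.
Proof.
  induction l as [|a l [l' Hl']].
  - exists []. intros y z [].
  - destruct (Hlf a) as [la Hla]. exists (la ++ l').
    intros y z [<-|Hy] Hyz; apply in_or_app; eauto.
Qed.

Lemma ball_finite (r : nat) u : exists l : list V, forall v, D u v <= Z.of_nat r -> In v l.
Proof.
  induction r as [|r [l Hl]].
  - exists [u]. intros v Hv. left. apply d_eq0. dge0 u v. lia.
  - destruct (neighbours_finite l) as [l' Hl']. exists (l ++ l'). intros v Hv. apply in_or_app.
    destruct (Z_le_gt_dec (D u v) (Z.of_nat r)) as [Hle|Hgt]; [left; auto|right].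
    destruct (point_between u v (Z.of_nat r) ltac:(lia)) as [w [W1 W2]].
    apply (Hl' w); [apply Hl; lia | apply d_eq1_adj; lia].
Qed.

Lemma shallow_atom_trivial n x y : D x x0 < Z.of_nat n -> atom n x y -> y = x.
Proof.
  intros Hx [c Hc].
  assert (Ex : D y x - D x x = c) by (apply Hc, ball_d; dsym x0 x; lia).
  drefl x. dge0 y x.
  destruct (Z.eq_dec (D y x) 0) as [E|E]; [now apply d_eq0|exfalso].
  destruct (point_between y x (D y x - 1) ltac:(lia)) as [w [W1 W2]].
  assert (Ew : D y w - D x w = c).
  { apply Hc, ball_d. dtri x0 x w. dsym x0 x. dsym x w. lia. }
  dsym x w. lia.
Qed.

Lemma infinite_atom_deep n x A : set_eq V A (atom n x) -> ~ finite_set V A -> D x x0 >= Z.of_nat n.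
Proof.
  intros HA Hinf. destruct (Z_le_gt_dec (Z.of_nat n) (D x x0)) as [H|H]; [lia|].
  exfalso. apply Hinf. exists [x]. intros y Hy. left.
  symmetry. apply (shallow_atom_trivial n x y); [lia | apply HA, Hy].
Qed.

Section Keys.
Variables (mul : G -> G -> G) (one : G) (inv : G -> G).
Hypothesis act_one : forall v, act one v = v.
Hypothesis act_mul : forall g h v, act (mul g h) v = act g (act h v).
Hypothesis act_inv_l : forall g v, act (inv g) (act g v) = v.
Hypothesis act_inv_r : forall g v, act g (act (inv g) v) = v.
Variable orbit_reps : list V.
Hypothesis orbit_reps_cover : forall v, exists u g, In u orbit_reps /\ act g u = v.
Variable radius : nat.
Hypothesis radius_large : 7 * K + 3 <= Z.of_nat radius.
Variable nbhd : V -> list V.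
Hypothesis nbhd_spec : forall u v, D u v <= Z.of_nat radius -> In v (nbhd u).

Local Notation R := (Z.of_nat radius).
Local Notation Rn := radius.

Definition shallow_profile (x : V) : list Z :=
  clamped_profile R (fun v => D x v - D x x0) (nbhd x0).

Definition depth_profile (n : nat) (g0 : G) (u : V) : list Z :=
  clamped_profile R (fun v => D x0 (act g0 v) - Z.of_nat n) (nbhd u).

Definition cone_profile (x p : V) (g0 : G) (u : V) : list Z :=
  clamped_profile R (fun v => D x (act g0 v) - D x p) (nbhd u).

(* A shallow atom is determined by the distances from [x] to the R-ball around [x0]; a deep
   one by the depth and distance-to-[x] profiles on the R-ball around the apex [p] of its
   cone, read off in a fixed orbit representative [u] of [p]. *)
Inductive atom_key : nat * (V -> Prop) -> nat * V * list Z * list Z -> Prop :=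
| key_shallow n A x : (n < Rn)%nat -> set_eq V A (atom n x) ->
    atom_key (n, A) (n, x0, shallow_profile x, [])
| key_deep n A x p g0 u : (Rn <= n)%nat -> set_eq V A (atom n x) ->
    D p x0 = Z.of_nat n -> D x x0 = D x p + Z.of_nat n -> act g0 u = p ->
    atom_key (n, A) (Rn, u, depth_profile n g0 u, cone_profile x p g0 u).

Definition candidate_keys : list (nat * V * list Z * list Z) :=
  flat_map (fun n => map (fun l => (n, x0, l, []))
                         (lists_over (length (nbhd x0)) (zrange R))) (seq 0 Rn) ++
  flat_map (fun u => flat_map (fun l1 => map (fun l2 => (Rn, u, l1, l2))
                                             (lists_over (length (nbhd u)) (zrange R)))
                              (lists_over (length (nbhd u)) (zrange R))) orbit_reps.

Lemma atom_key_exists n A : in_An V adj x0 n A ->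
  exists k, In k candidate_keys /\ atom_key (n, A) k.
Proof.
  intros [[x HA] Hinf]. pose proof (infinite_atom_deep n x A HA Hinf) as Hxn.
  unfold candidate_keys.
  destruct (Nat.lt_ge_cases n Rn) as [Hs|Hl].
  - eexists. split; [|exact (key_shallow n A x Hs HA)].
    apply in_or_app. left. apply in_flat_map. exists n. split; [apply in_seq; lia|].
    apply in_map_iff. eexists. split; [reflexivity | apply clamped_profile_in; lia].
  - destruct (point_between x x0 (D x x0 - Z.of_nat n) ltac:(lia)) as [p [P1 P2]].
    destruct (orbit_reps_cover p) as [u [g0 [Hu Hg0]]].
    eexists. split; [|exact (key_deep n A x p g0 u Hl HA ltac:(lia) ltac:(lia) Hg0)].
    apply in_or_app. right. apply in_flat_map. exists u. split; [exact Hu|].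
    apply in_flat_map. eexists. split; [apply clamped_profile_in; lia|].
    apply in_map_iff. eexists. split; [reflexivity | apply clamped_profile_in; lia].
Qed.

Lemma shallow_profile_same_atom n x x2 : (n < Rn)%nat ->
  shallow_profile x = shallow_profile x2 -> atom n x2 x.
Proof.
  intros Hn E. exists (D x x0 - D x2 x0). intros b Hb. apply ball_d in Hb.
  assert (Hin : In b (nbhd x0)) by (apply nbhd_spec; lia).
  dtri x b x0. dtri x x0 b. dtri x2 b x0. dtri x2 x0 b. dsym b x0.
  enough (D x b - D x x0 = D x2 b - D x2 x0) by lia.
  apply (clamped_profile_eq R _ _ _ _ E Hin); lia.
Qed.

Lemma equal_profiles_cone_match n m x x2 p p2 g0 g2 u :
  (Rn <= n)%nat -> (Rn <= m)%nat -> D p x0 = Z.of_nat n -> D p2 x0 = Z.of_nat m ->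
  D x x0 = D x p + Z.of_nat n -> D x2 x0 = D x2 p2 + Z.of_nat m ->
  act g0 u = p -> act g2 u = p2 ->
  depth_profile n g0 u = depth_profile m g2 u -> cone_profile x p g0 u = cone_profile x2 p2 g2 u ->
  cone_match n m x x2 p p2 (mul g2 (inv g0)) (mul g0 (inv g2)).
Proof.
  intros Hn Hm Hp Hp2 Hx Hx2 Hg0 Hg2 Edepth Eprof.
  assert (pull : forall w, D w p <= 7 * K + 3 ->
    act (mul g2 (inv g0)) w = act g2 (act (inv g0) w) /\ In (act (inv g0) w) (nbhd u) /\
    act g0 (act (inv g0) w) = w /\ D (act g2 (act (inv g0) w)) p2 <= R).
  { intros w Hw.
    assert (Hwu : D (act (inv g0) w) u <= R).
    { rewrite <- (act_isometry g0), act_inv_r, Hg0. lia. }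
    rewrite act_mul, act_inv_r, <- Hg2, act_isometry.
    repeat split; auto. apply nbhd_spec. dsym u (act (inv g0) w). lia. }
  split.
  - intros v. rewrite !act_mul, act_inv_l, act_inv_r. reflexivity.
  - intros v. rewrite !act_mul, act_inv_l, act_inv_r. reflexivity.
  - exact Hp.
  - exact Hp2.
  - lia.
  - lia.
  - exact Hx.
  - exact Hx2.
  - rewrite act_mul, <- Hg0, act_inv_l. exact Hg2.
  - intros w Hw. destruct (pull w Hw) as [-> [Hin [Ew Hw2]]].
    pose proof (clamped_profile_eq _ _ _ _ _ Edepth Hin) as E. cbn beta in E. rewrite Ew in E.
    dtri x0 w p. dtri x0 p w. dsym w p. dsym x0 p. dsym x0 p2.
    dtri x0 (act g2 (act (inv g0) w)) p2. dtri x0 p2 (act g2 (act (inv g0) w)).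
    dsym (act g2 (act (inv g0) w)) p2. lia.
  - intros w Hw. destruct (pull w Hw) as [-> [Hin [Ew Hw2]]].
    pose proof (clamped_profile_eq _ _ _ _ _ Eprof Hin) as E. cbn beta in E. rewrite Ew in E.
    dtri x w p. dtri x p w. dsym w p.
    dtri x2 (act g2 (act (inv g0) w)) p2. dtri x2 p2 (act g2 (act (inv g0) w)).
    dsym (act g2 (act (inv g0) w)) p2. lia.
Qed.

Lemma atom_key_same_type a b k : atom_key a k -> atom_key b k ->
  same_type V adj G act x0 (fst a) (snd a) (fst b) (snd b).
Proof.
  intros KA KB.
  destruct KA as [n A x Hn HA | n A x p g0 u Hn HA Hp Hx Hg0];
    inversion KB as [m B x2 Hm HB | m B x2 p2 g2 u2 Hm HB Hp2 Hx2 Hg2];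
    subst; cbn [fst snd]; try lia.
  - exists one. apply (induces_morphism_id one n A B act_one). intros y. split; intros Hy.
    + apply HB, (atom_trans _ _ x); [apply shallow_profile_same_atom; auto | apply HA, Hy].
    + apply HA, (atom_trans _ _ x2); [apply shallow_profile_same_atom; auto | apply HB, Hy].
  - exists (mul g2 (inv g0)).
    eapply cone_match_induces_morphism; [|exact HA|exact HB].
    apply (equal_profiles_cone_match n m x x2 _ _ g0 g2 u); auto; symmetry; auto.
Qed.

End Keys.

Lemma finitely_many_atom_types (mul : G -> G -> G) (one : G) (inv : G -> G) :
  (forall v, act one v = v) -> (forall g h v, act (mul g h) v = act g (act h v)) ->
  (forall g v, act (inv g) (act g v) = v) -> (forall g v, act g (act (inv g) v) = v) ->
  cocompact_action V G act ->
  exists reps : list (nat * (V -> Prop)),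
    (forall p, In p reps -> in_An V adj x0 (fst p) (snd p)) /\
    (forall n A, in_An V adj x0 n A ->
       exists p, In p reps /\ same_type V adj G act x0 n A (fst p) (snd p)).
Proof.
  intros act_one act_mul act_inv_l act_inv_r [orbit_reps cover].
  set (radius := Z.to_nat (7 * K + 3)).
  destruct (choice (fun u l => forall v, D u v <= Z.of_nat radius -> In v l) (ball_finite radius))
    as [nbhd nbhd_spec].
  destruct (finite_classes _ _ (fun a => in_An V adj x0 (fst a) (snd a))
              (fun a b => same_type V adj G act x0 (fst a) (snd a) (fst b) (snd b))
              (atom_key radius nbhd) (candidate_keys orbit_reps radius nbhd))
    as [reps [Hreps Hcover]].
  - intros [n A] HA. apply atom_key_exists; auto.
  - intros a b k _ _. apply (atom_key_same_type mul one inv); auto. lia.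
  - exists reps. split; [exact Hreps|]. intros n A HA. exact (Hcover (n, A) HA).
Qed.

End HyperbolicGraph.

Theorem mainTheorem19
  (V : Type) (adj : V -> V -> Prop) (x0 : V)
  (G : Type) (mul : G -> G -> G) (one : G) (inv : G -> G) (act : G -> V -> V)
  (Hsimple : simple_graph V adj)
  (Hlf : locally_finite V adj)
  (Hconn : connected V adj)
  (Hhyp : hyperbolic V adj)
  (Hgrp : is_group G mul one inv)
  (Hact : is_action V G mul one act)
  (Hisom : acts_by_isometries V G act adj)
  (Hproper : proper_action V G act)
  (Hcocpt : cocompact_action V G act) :
  exists reps : list (nat * (V -> Prop)),
    (forall p, In p reps -> in_An V adj x0 (fst p) (snd p)) /\
    (forall (n : nat) (A : V -> Prop), in_An V adj x0 n A ->
       exists p, In p reps /\ same_type V adj G act x0 n A (fst p) (snd p)).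
Proof.
  destruct Hsimple as [adj_sym _].
  destruct Hhyp as [delta Hdelta].
  destruct Hgrp as (_ & _ & _ & inv_l & inv_r).
  destruct Hact as (act_one & act_mul).
  set (K := Z.max 0 (2 * delta)).
  assert (four_point : forall w a b c,
    gromov2 V adj w a b >= gromov2 V adj w a c - K \/
    gromov2 V adj w a b >= gromov2 V adj w b c - K).
  { intros w a b c. pose proof (Hdelta w a b c). lia. }
  apply (finitely_many_atom_types V adj adj_sym Hconn x0 K ltac:(lia) four_point
           G act Hisom Hlf mul one inv act_one act_mul); auto.
  - intros g v. rewrite <- act_mul, inv_l. apply act_one.
  - intros g v. rewrite <- act_mul, inv_r. apply act_one.
Qed.
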